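(* For fixed $t\in(0,1)$, the map $q\mapsto M(t;q)$ is increasing on $\mathbb{R}$, and \[ \lim_{q\to-\infty}M(t;q)=t^{1/3},\qquad \lim_{q\to\infty}M(t;q)=1. \]
   Context: For $t\in(0,1)$ and $q\in\mathbb{R}$: $M(t;q)=\left(\frac{8}{15q}+\left(1-\frac{8}{15q}\right)t^q\right)^{5/(15q-8)}$ if $q\ne0,\frac8{15}$; $M(t;0)=\left(1-\frac8{15}\ln t\right)^{-5/8}$; $M(t;\frac8{15})=\exp\frac{5(t^{8/15}-1)}{8}$. *)

From Stdlib Require Import Reals.
From Coquelicot Require Import Coquelicot.
Open Scope R_scope.

Definition M (t q : R) : R :=
  if Req_EM_T q 0 then Rpower (1 - 8/15 * ln t) (-(5/8))
  else if Req_EM_T q (8/15) then exp (5 * (Rpower t (8/15) - 1) / 8)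
  else Rpower (8 / (15 * q) + (1 - 8 / (15 * q)) * Rpower t q) (5 / (15 * q - 8)).

From Stdlib Require Import Reals Lra Lia Psatz Factorial.
From Coquelicot Require Import Coquelicot.
Open Scope R_scope.

(* With u = -ln t and b = 8u/15 we have t^q = exp(-uq), and M(t;q) = exp((u/3) s(uq)) where s(x)
   is the slope of phi(x) = ln(exp(-x) + b (1 - exp(-x))/x) between b and x: phi(b) = 0, and the
   three cases defining M are the values of s at x = 0, at x = b (where s(b) = phi'(b)) and
   elsewhere.  Monotonicity in q is therefore monotonicity of chord slopes, i.e. strict convexity
   of phi.  For x <> 0, phi'(x) = (1 + b - x)/(x + b (exp x - 1)) - 1/x, whose derivative has
   numerator b x (exp x (x^2 - 2x + 2) - 2) + b^2 ((exp x - 1)^2 - x^2 exp x), positive by two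
   elementary inequalities; phi is analytic at 0, which glues the two branches.  The limits come
   from phi(x) = -x + O(1) as x -> -oo and ln(b/x) < phi(x) < 0 as x -> +oo. *)

Definition slope (f : R -> R) (a b : R) : R := (f b - f a) / (b - a).

Lemma slope_sym (f : R -> R) (a b : R) : a <> b -> slope f a b = slope f b a.
Proof. intro Hab. unfold slope. field. split; lra. Qed.

Lemma slope_MVT (f f' : R -> R) (a b : R) : a < b ->
  (forall x, a <= x <= b -> is_derive f x (f' x)) ->
  exists c, a < c < b /\ slope f a b = f' c.
Proof.
  intros Hab Hd.
  destruct (MVT_cor2 f f' a b Hab (fun x Hx => proj1 (is_derive_Reals f x (f' x)) (Hd x Hx)))
    as [c [Hc Hcab]].
  exists c; split; [exact Hcab|]. unfold slope. rewrite Hc. field. lra.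
Qed.

Lemma lt_of_is_derive_pos (f f' : R -> R) (a b : R) : a < b ->
  (forall x, a <= x <= b -> is_derive f x (f' x)) ->
  (forall x, a < x < b -> 0 < f' x) -> f a < f b.
Proof.
  intros Hab Hd Hpos. destruct (slope_MVT f f' a b Hab Hd) as [c [Hc Hs]].
  assert (Hfc := Hpos c Hc).
  assert (E : f b - f a = slope f a b * (b - a)) by (unfold slope; field; lra).
  rewrite Hs in E. nra.
Qed.

Section Slopes.

Variables f f' : R -> R.
Hypothesis f_deriv : forall x, is_derive f x (f' x).

(* [f' p] is the limit of the slopes [slope f h p], each a value of [f'] on [(h, p)] by the MVT;
   so no continuity of [f'] is needed. *)
Lemma deriv_le_of_increasing_left (x p : R) : x < p ->
  (forall y, x < y < p -> f' x < f' y) -> f' x <= f' p.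
Proof.
  intros Hxp Hinc. apply Rnot_lt_le. intro Hlt.
  destruct (proj1 (is_derive_Reals f p (f' p)) (f_deriv p) (f' x - f' p) ltac:(lra))
    as [d Hd].
  set (h := - Rmin (d / 2) ((p - x) / 2)).
  assert (Hh : - d < h < 0 /\ x < p + h).
  { assert (Rmin (d / 2) ((p - x) / 2) <= d / 2) by apply Rmin_l.
    assert (Rmin (d / 2) ((p - x) / 2) <= (p - x) / 2) by apply Rmin_r.
    assert (0 < Rmin (d / 2) ((p - x) / 2)) by (apply Rmin_glb_lt; destruct d; simpl; lra).
    unfold h; lra. }
  destruct (slope_MVT f f' (p + h) p ltac:(lra) (fun z _ => f_deriv z)) as [c [Hc Hs]].
  assert (f' x < f' c) by (apply Hinc; lra).
  specialize (Hd h ltac:(lra) ltac:(rewrite Rabs_left; lra)).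
  replace ((f (p + h) - f p) / h) with (slope f (p + h) p) in Hd
    by (unfold slope; field; lra).
  rewrite Hs in Hd. apply Rabs_def2 in Hd. lra.
Qed.

Lemma deriv_ge_of_increasing_right (x p : R) : p < x ->
  (forall y, p < y < x -> f' y < f' x) -> f' p <= f' x.
Proof.
  intros Hpx Hinc. apply Rnot_lt_le. intro Hlt.
  destruct (proj1 (is_derive_Reals f p (f' p)) (f_deriv p) (f' p - f' x) ltac:(lra))
    as [d Hd].
  set (h := Rmin (d / 2) ((x - p) / 2)).
  assert (Hh : 0 < h < d /\ p + h < x).
  { assert (Rmin (d / 2) ((x - p) / 2) <= d / 2) by apply Rmin_l.
    assert (Rmin (d / 2) ((x - p) / 2) <= (x - p) / 2) by apply Rmin_r.
    assert (0 < Rmin (d / 2) ((x - p) / 2)) by (apply Rmin_glb_lt; destruct d; simpl; lra).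
    unfold h; lra. }
  destruct (slope_MVT f f' p (p + h) ltac:(lra) (fun z _ => f_deriv z)) as [c [Hc Hs]].
  assert (f' c < f' x) by (apply Hinc; lra).
  specialize (Hd h ltac:(lra) ltac:(rewrite Rabs_right; lra)).
  replace ((f (p + h) - f p) / h) with (slope f p (p + h)) in Hd
    by (unfold slope; field; lra).
  rewrite Hs in Hd. apply Rabs_def2 in Hd. lra.
Qed.

Lemma deriv_increasing_across (p : R) :
  (forall x y, x < y < p -> f' x < f' y) ->
  (forall x y, p < x < y -> f' x < f' y) ->
  forall x y, x < y -> f' x < f' y.
Proof.
  intros Hl Hr.
  assert (Hlp : forall x, x < p -> f' x < f' p).
  { intros x Hx. apply Rlt_le_trans with (f' ((x + p) / 2)); [apply Hl; lra|].
    apply deriv_le_of_increasing_left; [lra|]. intros y Hy. apply Hl; lra. }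
  assert (Hrp : forall y, p < y -> f' p < f' y).
  { intros y Hy. apply Rle_lt_trans with (f' ((p + y) / 2)); [|apply Hr; lra].
    apply deriv_ge_of_increasing_right; [lra|]. intros x Hx. apply Hr; lra. }
  intros x y Hxy.
  destruct (Rtotal_order y p) as [Hy|[Hy|Hy]];
    [apply Hl; lra | subst y; auto |].
  destruct (Rtotal_order x p) as [Hx|[Hx|Hx]];
    [apply Rlt_trans with (f' p); auto | subst x; auto | apply Hr; lra].
Qed.

Hypothesis f'_increasing : forall x y, x < y -> f' x < f' y.

Lemma slope_lt_slope (x y z : R) : x < y < z ->
  slope f x y < slope f x z < slope f y z.
Proof.
  intros Hxyz.
  destruct (slope_MVT f f' x y ltac:(lra) (fun w _ => f_deriv w)) as [c1 [Hc1 Hs1]].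
  destruct (slope_MVT f f' y z ltac:(lra) (fun w _ => f_deriv w)) as [c2 [Hc2 Hs2]].
  assert (Hlt : slope f x y < slope f y z) by (rewrite Hs1, Hs2; apply f'_increasing; lra).
  assert (E1 : slope f x z - slope f x y = (z - y) / (z - x) * (slope f y z - slope f x y))
    by (unfold slope; field; lra).
  assert (E2 : slope f y z - slope f x z = (y - x) / (z - x) * (slope f y z - slope f x y))
    by (unfold slope; field; lra).
  assert (0 < (z - y) / (z - x)) by (apply Rdiv_lt_0_compat; lra).
  assert (0 < (y - x) / (z - x)) by (apply Rdiv_lt_0_compat; lra).
  split; nra.
Qed.

Definition chord (p q : R) : R := if Req_EM_T q p then f' p else slope f p q.

Lemma chord_increasing (p q1 q2 : R) : q1 < q2 -> chord p q1 < chord p q2.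
Proof.
  intros H12. unfold chord.
  destruct (Req_EM_T q1 p) as [->|n1]; destruct (Req_EM_T q2 p) as [->|n2]; [lra| | |].
  - destruct (slope_MVT f f' p q2 H12 (fun w _ => f_deriv w)) as [c [Hc ->]].
    apply f'_increasing; lra.
  - rewrite slope_sym by lra.
    destruct (slope_MVT f f' q1 p H12 (fun w _ => f_deriv w)) as [c [Hc ->]].
    apply f'_increasing; lra.
  - destruct (Rtotal_order q2 p) as [H2|[H2|H2]]; [|lra|].
    + rewrite !(slope_sym f p) by lra. apply (slope_lt_slope q1 q2 p); lra.
    + destruct (Rtotal_order q1 p) as [H1|[H1|H1]]; [|lra|].
      * rewrite (slope_sym f p q1) by lra.
        destruct (slope_lt_slope q1 p q2); lra.
      * apply (slope_lt_slope p q1 q2); lra.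
Qed.

End Slopes.

Lemma is_lim_inv_infty (x0 : Rbar) :
  x0 = p_infty \/ x0 = m_infty -> is_lim (fun x => / x) x0 0.
Proof.
  intro Hx0. replace (Finite 0) with (Rbar_inv x0) by (destruct Hx0 as [-> | ->]; reflexivity).
  apply is_lim_inv; [apply is_lim_id | destruct Hx0 as [-> | ->]; discriminate].
Qed.

Lemma is_lim_chord_infty (f f' : R -> R) (p l : R) (x0 : Rbar) :
  x0 = p_infty \/ x0 = m_infty ->
  is_lim (fun x => f x / x) x0 l -> is_lim (chord f f' p) x0 l.
Proof.
  intros Hx0 Hl. assert (Hinv := is_lim_inv_infty x0 Hx0).
  assert (Hfar : Rbar_locally' x0 (fun x => x <> 0 /\ x <> p)).
  { destruct Hx0 as [-> | ->]; [exists (Rabs p) | exists (- Rabs p)];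
      intros x Hx; split; intros ->; unfold Rabs in Hx; destruct Rcase_abs in Hx; lra. }
  apply is_lim_ext_loc with (fun x => (f x / x - f p * / x) * / (1 - p * / x)).
  - revert Hfar. apply filter_imp. intros x [Hx0' Hxp].
    unfold chord, slope. destruct (Req_EM_T x p); [contradiction|].
    field. split; [lra | exact Hx0'].
  - replace l with ((l - f p * 0) * / (1 - p * 0)) by field.
    apply (is_lim_mult _ _ _ (l - f p * 0) (/ (1 - p * 0))); [| |exact I].
    + apply is_lim_minus'; [exact Hl|]. apply (is_lim_scal_l _ (f p) x0 0), Hinv.
    + apply (is_lim_inv _ _ (1 - p * 0)); [|injection; lra].
      apply is_lim_minus'; [apply is_lim_const|]. apply (is_lim_scal_l _ p x0 0), Hinv.
Qed.

Lemma is_lim_comp_scal_infty (f : R -> R) (u : R) (x0 l : Rbar) : 0 < u ->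
  x0 = p_infty \/ x0 = m_infty -> is_lim f x0 l -> is_lim (fun q => f (u * q)) x0 l.
Proof.
  intros Hu Hx0 Hf.
  apply is_lim_ext with (fun q => f (u * q + 0)); [intro q; rewrite Rplus_0_r; reflexivity|].
  apply is_lim_comp_lin; [|lra].
  replace (Rbar_plus (Rbar_mult u x0) 0) with x0; [exact Hf|].
  destruct Hx0 as [-> | ->]; simpl;
    (destruct (Rle_dec 0 u) as [H|]; [destruct (Rle_lt_or_eq_dec 0 u H)|]; [reflexivity | lra..]).
Qed.

Lemma exp_sub_exp_opp_gt (w : R) : 0 < w -> 2 * w < exp w - exp (- w).
Proof.
  intro Hw.
  assert (H : exp 0 - exp (- 0) - 2 * 0 < exp w - exp (- w) - 2 * w).
  { apply (lt_of_is_derive_pos (fun w => exp w - exp (- w) - 2 * w)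
                               (fun w => exp w + exp (- w) - 2)); [exact Hw| |].
    - intros x _. auto_derive; [exact I | ring].
    - intros x Hx. rewrite exp_Ropp.
      assert (1 < exp x) by (rewrite <- exp_0; apply exp_increasing; lra).
      replace (exp x + / exp x - 2) with ((exp x - 1) ^ 2 / exp x) by (field; lra).
      apply Rdiv_lt_0_compat; nra. }
  rewrite Ropp_0, exp_0 in H. lra.
Qed.

Lemma sqr_lt_sqr_exp_sub_exp_opp (w : R) : w <> 0 -> (2 * w) ^ 2 < (exp w - exp (- w)) ^ 2.
Proof.
  intro Hw. destruct (Rlt_or_le 0 w) as [Hp|Hn].
  - assert (H := exp_sub_exp_opp_gt w Hp). nra.
  - assert (H := exp_sub_exp_opp_gt (- w) ltac:(lra)). rewrite Ropp_involutive in H. nra.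
Qed.

Lemma sqr_mul_exp_lt (x : R) : x <> 0 -> x ^ 2 * exp x < (exp x - 1) ^ 2.
Proof.
  intro Hx. set (w := x / 2).
  assert (Ex : exp x = exp w * exp w) by (rewrite <- exp_plus; f_equal; unfold w; field).
  assert (Ew : exp (- w) = / exp w) by apply exp_Ropp.
  assert (Hpos : 0 < exp w) by apply exp_pos.
  assert (E : (exp x - 1) ^ 2 - x ^ 2 * exp x
              = exp w ^ 2 * ((exp w - exp (- w)) ^ 2 - (2 * w) ^ 2)).
  { rewrite Ex, Ew. replace x with (2 * w) by (unfold w; field). field. lra. }
  assert (H := sqr_lt_sqr_exp_sub_exp_opp w ltac:(unfold w; lra)).
  assert (0 < exp w ^ 2 * ((exp w - exp (- w)) ^ 2 - (2 * w) ^ 2))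
    by (apply Rmult_lt_0_compat; nra).
  lra.
Qed.

Lemma mul_exp_poly_sub2_pos (x : R) : x <> 0 -> 0 < x * (exp x * (x ^ 2 - 2 * x + 2) - 2).
Proof.
  intro Hx.
  set (G := fun x => exp x * (x ^ 2 - 2 * x + 2) - 2).
  assert (HG0 : G 0 = 0) by (unfold G; rewrite exp_0; ring).
  assert (HGd : forall x, is_derive G x (exp x * x ^ 2))
    by (intro y; unfold G; auto_derive; [exact I | ring]).
  assert (HGpos : forall x, x <> 0 -> 0 < exp x * x ^ 2)
    by (intros y Hy; apply Rmult_lt_0_compat; [apply exp_pos | apply pow2_gt_0; exact Hy]).
  change (0 < x * G x).
  destruct (Rlt_or_le 0 x) as [Hp|Hn].
  - assert (G 0 < G x)
      by (apply (lt_of_is_derive_pos G (fun x => exp x * x ^ 2)); auto;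
          intros y Hy; apply HGpos; lra).
    nra.
  - assert (G x < G 0)
      by (apply (lt_of_is_derive_pos G (fun x => exp x * x ^ 2)); auto; try lra;
          intros y Hy; apply HGpos; lra).
    nra.
Qed.

Lemma CV_radius_exp : CV_radius (fun n => / INR (fact n)) = p_infty.
Proof.
  apply CV_radius_infinite_DAlembert.
  - intro n. apply Rinv_neq_0_compat, INR_fact_neq_0.
  - apply is_lim_seq_ext with (fun n => / INR (S n)).
    + intro n. rewrite fact_simpl, mult_INR.
      assert (0 < INR (fact n)) by apply INR_fact_lt_0.
      assert (0 < INR (S n)) by (apply lt_0_INR; lia).
      rewrite Rabs_pos_eq; [field; lra|].
      apply Rlt_le. replace (/ (INR (S n) * INR (fact n)) / / INR (fact n)) with (/ INR (S n))
        by (field; lra).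
      apply Rinv_0_lt_compat; lra.
    + apply (is_lim_seq_incr_1 (fun n => / INR n)).
      replace (Finite 0) with (Rbar_inv p_infty) by reflexivity.
      apply is_lim_seq_inv; [apply is_lim_seq_INR | discriminate].
Qed.

(* [expc z = (exp z - 1) / z], extended by [expc 0 = 1]. *)
Definition expc (z : R) : R := PSeries (PS_decr_1 (fun n => / INR (fact n))) z.

Lemma exp_eq_1_add_mul_expc (z : R) : exp z = 1 + z * expc z.
Proof.
  rewrite exp_Reals. unfold expc. rewrite PSeries_decr_1.
  - simpl. f_equal. field.
  - apply CV_radius_inside. rewrite CV_radius_exp. exact I.
Qed.

Lemma expc_0 : expc 0 = 1.
Proof. unfold expc. rewrite PSeries_0. unfold PS_decr_1. simpl. field. Qed.

Lemma ex_derive_expc (z : R) : ex_derive expc z.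
Proof.
  eexists. apply is_derive_PSeries. rewrite CV_radius_decr_1, CV_radius_exp. exact I.
Qed.

Lemma expc_pos (z : R) : 0 < expc z.
Proof.
  assert (E := exp_eq_1_add_mul_expc z).
  destruct (Rtotal_order z 0) as [Hn|[->|Hp]].
  - assert (exp z < 1) by (rewrite <- exp_0; apply exp_increasing; exact Hn). nra.
  - rewrite expc_0; lra.
  - assert (1 + z < exp z) by (apply exp_ineq1; lra). nra.
Qed.

Section Phi.

Variable b : R.
Hypothesis b_pos : 0 < b.

Definition psi (x : R) : R := exp (- x) + b * expc (- x).
Definition phi (x : R) : R := ln (psi x).
Definition rho (x : R) : R := x + b * (exp x - 1).
Definition dphi (x : R) : R := (1 + b - x) / rho x - / x.

Lemma psi_pos (x : R) : 0 < psi x.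
Proof. unfold psi. assert (H1 := exp_pos (- x)). assert (H2 := expc_pos (- x)). nra. Qed.

Lemma psi_eq (x : R) : x <> 0 -> psi x = exp (- x) + b * (1 - exp (- x)) / x.
Proof. intro Hx. unfold psi. rewrite (exp_eq_1_add_mul_expc (- x)). field. exact Hx. Qed.

Lemma mul_rho_pos (x : R) : x <> 0 -> 0 < x * rho x.
Proof.
  intro Hx. unfold rho. destruct (Rlt_or_le 0 x) as [Hp|Hn].
  - assert (1 < exp x) by (rewrite <- exp_0; apply exp_increasing; exact Hp).
    apply Rmult_lt_0_compat; nra.
  - assert (exp x < 1) by (rewrite <- exp_0; apply exp_increasing; lra).
    assert (x < 0) by lra.
    assert (x + b * (exp x - 1) < 0) by nra. nra.
Qed.

Lemma rho_neq0 (x : R) : x <> 0 -> rho x <> 0.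
Proof. intros Hx E. assert (H := mul_rho_pos x Hx). rewrite E in H. lra. Qed.

Lemma ex_derive_phi (x : R) : ex_derive phi x.
Proof.
  assert (H := psi_pos x). unfold phi, psi in *.
  auto_derive. exact (conj (ex_derive_expc _) (conj H I)).
Qed.

Lemma is_derive_phi (x : R) : x <> 0 -> is_derive phi x (dphi x).
Proof.
  intro Hx.
  apply is_derive_ext_loc with (fun y => ln (exp (- y) + b * (1 - exp (- y)) / y)).
  - assert (Hr : 0 < Rabs x) by (apply Rabs_pos_lt; exact Hx).
    exists (mkposreal _ Hr). intros y Hy. unfold phi. rewrite psi_eq; [reflexivity|].
    intros ->. change (Rabs (0 - x) < Rabs x) in Hy. rewrite Rminus_0_l, Rabs_Ropp in Hy. lra.
  - assert (Hp := psi_pos x). rewrite psi_eq in Hp by exact Hx.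
    assert (Hr := rho_neq0 x Hx). assert (He := exp_pos x).
    auto_derive; [repeat split; auto|].
    unfold dphi, rho in *. rewrite exp_Ropp in *. field.
    repeat split; auto; lra.
Qed.

Definition d2phi (x : R) : R :=
  (b * (x * (exp x * (x ^ 2 - 2 * x + 2) - 2)) + b ^ 2 * ((exp x - 1) ^ 2 - x ^ 2 * exp x))
  / (x ^ 2 * rho x ^ 2).

Lemma is_derive_dphi (x : R) : x <> 0 -> is_derive dphi x (d2phi x).
Proof.
  intro Hx. assert (Hr := rho_neq0 x Hx). unfold dphi, d2phi, rho in *.
  auto_derive; [repeat split; auto|].
  field. split; auto.
Qed.

Lemma dphi_lt (x y : R) : x < y -> 0 < x \/ y < 0 -> dphi x < dphi y.
Proof.
  intros Hxy Hs. apply (lt_of_is_derive_pos dphi d2phi x y Hxy).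
  - intros z Hz. apply is_derive_dphi. lra.
  - intros z Hz. assert (Hz0 : z <> 0) by lra.
    assert (HG := mul_exp_poly_sub2_pos z Hz0).
    assert (HS := sqr_mul_exp_lt z Hz0).
    assert (Hr := rho_neq0 z Hz0). unfold d2phi.
    apply Rdiv_lt_0_compat.
    + assert (0 < b ^ 2) by nra. nra.
    + apply Rmult_lt_0_compat; apply pow2_gt_0; auto.
Qed.

Lemma Derive_phi (x : R) : x <> 0 -> Derive phi x = dphi x.
Proof. intro Hx. apply is_derive_unique, is_derive_phi, Hx. Qed.

Lemma Derive_phi_increasing (x y : R) : x < y -> Derive phi x < Derive phi y.
Proof.
  apply (deriv_increasing_across phi (Derive phi)
           (fun z => Derive_correct _ _ (ex_derive_phi z)) 0).
  - intros u v Huv. rewrite !Derive_phi by lra. apply dphi_lt; lra.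
  - intros u v Huv. rewrite !Derive_phi by lra. apply dphi_lt; lra.
Qed.

Lemma phi_at_b : phi b = 0.
Proof.
  unfold phi. rewrite psi_eq by lra.
  replace (exp (- b) + b * (1 - exp (- b)) / b) with 1 by (field; lra). apply ln_1.
Qed.

Lemma phi_at_0 : phi 0 = ln (1 + b).
Proof. unfold phi, psi. rewrite Ropp_0, exp_0, expc_0. f_equal. ring. Qed.

Lemma Derive_phi_at_b : Derive phi b = (exp (- b) - 1) / b.
Proof.
  rewrite Derive_phi by lra. unfold dphi, rho.
  replace (b + b * (exp b - 1)) with (b * exp b) by ring.
  rewrite exp_Ropp. assert (0 < exp b) by apply exp_pos. field. lra.
Qed.

Lemma phi_div_m_infty : is_lim (fun x => phi x / x) m_infty (-1).
Proof.
  apply (is_lim_le_le_loc (fun x => -1 + b * / x) (fun _ => -1)).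
  - exists (-1). intros x Hx. set (E := exp (- x)).
    assert (HE : 1 < E) by (unfold E; rewrite <- exp_0; apply exp_increasing; lra).
    assert (Hq : 0 < (1 - E) / x) by (apply Rdiv_neg_neg; lra).
    assert (Hpsi : psi x = E + b * (1 - E) / x) by (apply psi_eq; lra).
    assert (Hlo : - x < phi x).
    { unfold phi. rewrite Hpsi, <- (ln_exp (- x)). apply ln_increasing; [apply exp_pos|].
      fold E. unfold Rdiv. nra. }
    assert (Hhi : phi x < - x + b).
    { unfold phi. rewrite Hpsi. rewrite <- (ln_exp (- x + b)), exp_plus. fold E.
      assert (1 + b < exp b) by (apply exp_ineq1; lra).
      assert (Ez : - x * (b * (1 - E) / x) = b * (E - 1)) by (field; lra).
      assert (0 < b * (1 - E) / x) by (unfold Rdiv in *; nra).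
      apply ln_increasing; nra. }
    assert (E1 : x * (phi x / x) = phi x) by (field; lra).
    assert (E2 : x * (b * / x) = b) by (field; lra).
    split; nra.
  - replace (Finite (-1)) with (Finite (-1 + b * 0)) by (f_equal; ring).
    apply is_lim_plus'; [apply is_lim_const|].
    apply (is_lim_scal_l _ b m_infty 0), is_lim_inv_infty. right; reflexivity.
  - apply is_lim_const.
Qed.

Lemma phi_div_p_infty : is_lim (fun x => phi x / x) p_infty 0.
Proof.
  apply (is_lim_le_le_loc (fun x => ln b * / x - ln x / x) (fun _ => 0)).
  - exists b. intros x Hx. set (E := exp (- x)).
    assert (HE : 0 < E < 1)
      by (split; [apply exp_pos | unfold E; rewrite <- exp_0; apply exp_increasing; lra]).
    assert (Hbx : 0 < b / x < 1).
    { assert (x * (b / x) = b) by (field; lra).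
      assert (0 < b / x) by (apply Rdiv_lt_0_compat; lra). split; nra. }
    assert (Hpsi : psi x = b / x + E * (1 - b / x))
      by (rewrite psi_eq by lra; unfold E; field; lra).
    assert (Hlo : ln b - ln x < phi x).
    { unfold phi. rewrite <- ln_div by lra. apply ln_increasing; nra. }
    assert (Hhi : phi x < 0).
    { unfold phi. rewrite <- ln_1. apply ln_increasing; [apply psi_pos | nra]. }
    assert (E1 : x * (phi x / x) = phi x) by (field; lra).
    assert (E2 : x * (ln b * / x - ln x / x) = ln b - ln x) by (field; lra).
    split; nra.
  - replace (Finite 0) with (Finite (ln b * 0 - 0)) by (f_equal; ring).
    apply is_lim_minus'; [|exact is_lim_div_ln_p].
    apply (is_lim_scal_l _ (ln b) p_infty 0), is_lim_inv_infty. left; reflexivity.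
  - apply is_lim_const.
Qed.

End Phi.

Lemma neg_ln_pos (t : R) : 0 < t < 1 -> 0 < - ln t.
Proof. intro ht. assert (ln t < ln 1) by (apply ln_increasing; lra). rewrite ln_1 in H. lra. Qed.

Lemma M_eq_exp_chord (t q : R) : 0 < t < 1 ->
  let u := - ln t in let b := 8 / 15 * u in
  M t q = exp (u / 3 * chord (phi b) (Derive (phi b)) b (u * q)).
Proof.
  intros ht u b. assert (Hu : 0 < u) by exact (neg_ln_pos t ht).
  assert (Hb : 0 < b) by (unfold b; lra).
  assert (Ht : forall r, Rpower t r = exp (- (u * r)))
    by (intro r; unfold Rpower, u; f_equal; ring).
  unfold M, chord, slope. rewrite (phi_at_b b Hb).
  destruct (Req_EM_T q 0) as [->|Hq0]; [|destruct (Req_EM_T q (8 / 15)) as [->|Hqc]].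
  - destruct (Req_EM_T (u * 0) b) as [E|_]; [lra|].
    rewrite Rmult_0_r, phi_at_0. unfold Rpower. f_equal.
    replace (1 - 8 / 15 * ln t) with (1 + b) by (unfold b, u; ring). unfold b. field. lra.
  - destruct (Req_EM_T (u * (8 / 15)) b) as [_|E]; [|unfold b in E; lra].
    rewrite Derive_phi_at_b, Ht by exact Hb. f_equal.
    replace (- (u * (8 / 15))) with (- b) by (unfold b; ring). unfold b. field. lra.
  - destruct (Req_EM_T (u * q) b) as [E|_]; [unfold b in E; nra|].
    rewrite Ht. unfold Rpower, phi. rewrite psi_eq by nra. f_equal.
    replace (exp (- (u * q)) + b * (1 - exp (- (u * q))) / (u * q))
      with (8 / (15 * q) + (1 - 8 / (15 * q)) * exp (- (u * q))) by (unfold b; field; lra).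
    assert (Hq : 15 * q - 8 <> 0) by lra.
    unfold b. field. split; [|exact Hq].
    replace (u * q * 15 - 8 * u) with (u * (15 * q - 8)) by ring.
    apply Rmult_integral_contrapositive_currified; lra.
Qed.

Theorem lemma9 (t : R) (ht : 0 < t < 1) :
  (forall q1 q2 : R, q1 < q2 -> M t q1 < M t q2) /\
  is_lim (fun q => M t q) m_infty (Rpower t (1/3)) /\
  is_lim (fun q => M t q) p_infty 1.
Proof.
  set (u := - ln t). assert (Hu : 0 < u) by exact (neg_ln_pos t ht).
  set (b := 8 / 15 * u). assert (Hb : 0 < b) by (unfold b; lra).
  set (s := chord (phi b) (Derive (phi b)) b).
  assert (HM : forall q, M t q = exp (u / 3 * s (u * q)))
    by exact (fun q => M_eq_exp_chord t q ht).
  assert (Hs : forall x y, x < y -> s x < s y).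
  { apply chord_increasing; [intro z; apply Derive_correct, ex_derive_phi, Hb |].
    apply Derive_phi_increasing, Hb. }
  assert (Hlim : forall (x0 : Rbar) (l : R), x0 = p_infty \/ x0 = m_infty ->
            is_lim (fun x => phi b x / x) x0 l -> is_lim (fun q => M t q) x0 (exp (u / 3 * l))).
  { intros x0 l Hx0 Hl. apply is_lim_ext with (fun q => exp (u / 3 * s (u * q))).
    { intro q. symmetry. apply HM. }
    apply (is_lim_comp_continuous (fun q => u / 3 * s (u * q)) exp);
      [|apply continuity_pt_filterlim, derivable_continuous_pt, derivable_pt_exp].
    apply (is_lim_scal_l _ (u / 3) x0 l), is_lim_comp_scal_infty; [exact Hu | exact Hx0 |].
    apply is_lim_chord_infty; assumption. }
  split; [|split].
  - intros q1 q2 Hq. rewrite !HM. apply exp_increasing, Rmult_lt_compat_l; [lra|].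
    apply Hs, Rmult_lt_compat_l; assumption.
  - replace (Rpower t (1 / 3)) with (exp (u / 3 * -1)) by (unfold Rpower, u; f_equal; field).
    apply Hlim; [right; reflexivity | apply phi_div_m_infty, Hb].
  - replace 1 with (exp (u / 3 * 0)) by (rewrite Rmult_0_r; apply exp_0).
    apply Hlim; [left; reflexivity | apply phi_div_p_infty, Hb].
Qed.
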